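(* Let $X_1,X_2$ be forests and $A\subset X=X_1\times X_2$. Let $A_1$ be the set of points $x\in X$ such that $x=y\vee z$ for some $c$-comparable $y,z\in A$, and let $A_2$ be the set of $t=(t_1,t_2)\in X$ such that $t_1\le x_1$ and $t_2\le x_2$ for some $x=(x_1,x_2)\in A_1$. Then $A_2$ equals the c.h-envelope $\widehat A$ of $A$.
   Context: A partially ordered set $Y$ is a forest if for every $y_0\in Y$ the set $\{y\ge y_0\}$ is finite and totally ordered. For forests $X_1,\dots,X_n$ and $X=X_1\times\cdots\times X_n$, write $y\le x$ if $y_i\le x_i$ for all $i$. A subset $A\subset X$ is hereditary if $x\in A$ and $y\le x$ imply $y\in A$. Points $x,y\in X$ are $c$-comparable if for each $i$, $x_i$ and $y_i$ are comparable; then $x\vee y=(\max(x_i,y_i))_i$. $A$ is concave if $x\vee y\in A$ whenever $x,y\in A$ are $c$-comparable. The c.h-envelope $\widehat A$ of $A$ is the smallest concave hereditary subset of $X$ containing $A$. *)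

From HB Require Import structures.
From mathcomp Require Import all_boot all_order.
Set Implicit Arguments. Unset Strict Implicit. Unset Printing Implicit Defensive.
Import Order.TTheory.
Local Open Scope order_scope.

Definition is_forest (d : Order.disp_t) (Y : porderType d) : Prop :=
  forall y0 : Y,
    (exists s : seq Y, forall y : Y, (y0 <= y) <-> (y \in s)) /\
    (forall y z : Y, y0 <= y -> y0 <= z -> (y <= z) \/ (z <= y)).

Section Prod2.
Context (d1 d2 : Order.disp_t) (X1 : porderType d1) (X2 : porderType d2).

Definition ple (y x : X1 * X2) : Prop := (y.1 <= x.1) /\ (y.2 <= x.2).

Definition hereditary (A : X1 * X2 -> Prop) : Prop :=
  forall x y, A x -> ple y x -> A y.

Definition c_comparable (x y : X1 * X2) : Prop :=
  (x.1 >=< y.1) /\ (x.2 >=< y.2).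

(* x \/ y = (max(x_i, y_i))_i, meaningful for c-comparable x, y *)
Definition cjoin (x y : X1 * X2) : X1 * X2 :=
  (Order.max x.1 y.1, Order.max x.2 y.2).

Definition concave (A : X1 * X2 -> Prop) : Prop :=
  forall x y, A x -> A y -> c_comparable x y -> A (cjoin x y).

Definition ch_envelope (A : X1 * X2 -> Prop) : X1 * X2 -> Prop :=
  fun x => forall B : X1 * X2 -> Prop,
    concave B -> hereditary B -> (forall a, A a -> B a) -> B x.

Definition A1_of (A : X1 * X2 -> Prop) : X1 * X2 -> Prop :=
  fun x => exists y z, A y /\ A z /\ c_comparable y z /\ x = cjoin y z.

Definition A2_of (A : X1 * X2 -> Prop) : X1 * X2 -> Prop :=
  fun t => exists x, A1_of A x /\ ple t x.

End Prod2.

From mathcomp Require Import all_boot all_order.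
Set Implicit Arguments. Unset Strict Implicit. Unset Printing Implicit Defensive.
Import Order.TTheory.
Local Open Scope order_scope.

(* A_2 is hereditary by construction and contains A (take y = z), and it lies
   in every concave hereditary set containing A; so it remains to show that
   A_2 is concave.  Joining t <= x and t' <= x' (x, x' in A_1) is only hard in
   the "crossed" case, where the join is (t_1, t'_2).  The forest property makes
   x_1, x'_1 comparable (both lie above t'_1) and likewise x_2, x'_2; unless x or
   x' already dominates the join, we get x'_1 <= x_1 and x_2 <= x'_2, and then
   points a, b of A realising x_1 and x'_2 are c-comparable with a \/ b above
   the join. *)

Definition up_totally_ordered (d : Order.disp_t) (Y : porderType d) : Prop :=
  forall u y z : Y, u <= y -> u <= z -> y <= z \/ z <= y.

Lemma forest_up_totally_ordered (d : Order.disp_t) (Y : porderType d) :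
  is_forest Y -> up_totally_ordered Y.
Proof. by move=> HY u; apply: (HY u).2. Qed.

Lemma comparable_le_cases (d : Order.disp_t) (T : porderType d) (x y : T) :
  x >=< y -> x <= y \/ y <= x.
Proof. by case/orP; [left | right]. Qed.

Section Envelope.
Context (d1 d2 : Order.disp_t) (X1 : porderType d1) (X2 : porderType d2).
Variable A : X1 * X2 -> Prop.

Lemma cjoinxx (x : X1 * X2) : cjoin x x = x.
Proof. by case: x => x1 x2; rewrite /cjoin /= !maxxx. Qed.

Lemma A1_of_fst x : A1_of A x -> exists2 a, A a & a.1 = x.1 /\ a.2 <= x.2.
Proof.
move=> [y [z [Ay [Az [[c1 c2] ->]]]]]; rewrite /cjoin /=.
have [h1|h1] := comparable_le_cases c1; have [h2|h2] := comparable_le_cases c2.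
- by exists z => //; rewrite max_r // max_r.
- by exists z => //; rewrite max_r // max_l.
- by exists y => //; rewrite max_l // max_r.
- by exists y => //; rewrite max_l // max_l.
Qed.

Lemma A1_of_snd x : A1_of A x -> exists2 b, A b & b.1 <= x.1 /\ b.2 = x.2.
Proof.
move=> [y [z [Ay [Az [[c1 c2] ->]]]]]; rewrite /cjoin /=.
have [h1|h1] := comparable_le_cases c1; have [h2|h2] := comparable_le_cases c2.
- by exists z => //; rewrite max_r // max_r.
- by exists y => //; rewrite max_r // max_l.
- by exists z => //; rewrite max_l // max_r.
- by exists y => //; rewrite max_l // max_l.
Qed.

Lemma sub_A2_of a : A a -> A2_of A a.
Proof.
move=> Aa; exists a; split; last by split.
exists a, a; do 3!split => //; last by rewrite cjoinxx.
by split; apply: comparablexx.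
Qed.

Lemma A2_of_hereditary : hereditary (A2_of A).
Proof.
move=> x y [x' [Ax' [h1 h2]]] [h3 h4].
by exists x'; split; last by split; apply: le_trans; eassumption.
Qed.

Lemma A2_of_sub_ch_envelope t : A2_of A t -> ch_envelope A t.
Proof.
move=> [x [[y [z [Ay [Az [cyz ->]]]]] ht]] B cB hB AB.
by apply: (hB _ _ _ ht); apply: cB; auto.
Qed.

Hypotheses (HX1 : up_totally_ordered X1) (HX2 : up_totally_ordered X2).

Lemma A2_of_cross t t' :
  A2_of A t -> A2_of A t' -> t'.1 <= t.1 -> t.2 <= t'.2 ->
  A2_of A (t.1, t'.2).
Proof.
move=> [x [Ax [tx1 tx2]]] [x' [Ax' [tx1' tx2']]] le1 le2.
have [xx1|xx1] := HX1 (le_trans le1 tx1) tx1'.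
  by exists x'; split=> //; split=> //=; apply: le_trans xx1.
have [xx2|xx2] := HX2 tx2 (le_trans le2 tx2'); last first.
  by exists x; split=> //; split=> //=; apply: le_trans xx2.
have [a Aa [a1 a2]] := A1_of_fst Ax.
have [b Ab [b1 b2]] := A1_of_snd Ax'.
have ba1 : b.1 <= a.1 by rewrite a1; apply: le_trans xx1.
have ab2 : a.2 <= b.2 by rewrite b2; apply: le_trans xx2.
exists (cjoin a b); split.
  exists a, b; do 3!split => //.
  by split; apply/orP; [right | left].
by rewrite /cjoin /= max_l // max_r // a1 b2.
Qed.

Lemma A2_of_concave : concave (A2_of A).
Proof.
move=> t t' At At' [c1 c2]; rewrite /cjoin.
have [h1|h1] := comparable_le_cases c1; have [h2|h2] := comparable_le_cases c2.
- by rewrite max_r // max_r //; apply: A2_of_cross.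
- by rewrite max_r // max_l //; apply: A2_of_cross.
- by rewrite max_l // max_r //; apply: A2_of_cross.
- by rewrite max_l // max_l //; apply: A2_of_cross.
Qed.

End Envelope.

Theorem mainTheorem3 (d1 d2 : Order.disp_t)
  (X1 : porderType d1) (X2 : porderType d2)
  (HX1 : is_forest X1) (HX2 : is_forest X2)
  (A : X1 * X2 -> Prop) :
  forall t : X1 * X2, A2_of A t <-> ch_envelope A t.
Proof.
move=> t; split; first exact: A2_of_sub_ch_envelope.
apply.
- by apply: A2_of_concave; apply: forest_up_totally_ordered.
- exact: A2_of_hereditary.
- exact: sub_A2_of.
Qed.
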